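(* Let $k\ne\mathbb{F}_2$ be a field, $p=\operatorname{char}(k)$, and let $f\in k[x_1,\dots,x_n]_d$ with $d\ge3$. Suppose that in some basis $x_1,\dots,x_n$ the following hold: (1) $\Xi(\partial f/\partial x_i)\ne\varnothing$ for all $1\le i\le n$; (2) $\Xi(\partial f/\partial x_i)\cap\Xi(\partial f/\partial x_j)=\varnothing$ for all $1\le i<j\le n$; (3) $\Xi(f)$ equals the set of exponent vectors $(d_1,\dots,d_n)$ with $\sum d_i=d$ such that $p\nmid d_i$ for some $i$ and $\Xi\bigl(\partial(x_1^{d_1}\cdots x_n^{d_n})/\partial x_i\bigr)\subset\bigcup_{j=1}^n\Xi(\partial f/\partial x_j)$ for all $1\le i\le n$; (4) the graph with vertex set $\{1,\dots,n\}$ and edges $\{(ij)\mid\partial^2f/\partial x_i\partial x_j\ne0\}$ is connected. Then $f$ is not a direct sum.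
   Context: For a nonzero form $h$ in the basis $x_1,\dots,x_n$, the state $\Xi(h)$ is the set of exponent vectors $(d_1,\dots,d_n)$ of monomials $x_1^{d_1}\cdots x_n^{d_n}$ appearing in $h$ with nonzero coefficient; $\Xi(0)=\varnothing$. (For $p=0$, ''$p\nmid d_i$'' means $d_i\ne0$.) A form $f$ is a direct sum if, after a linear change of variables, $f=f_1(x_1,\dots,x_a)+f_2(x_{a+1},\dots,x_n)$ with $1\le a\le n-1$ and $f_1,f_2\ne0$. *)

From HB Require Import structures.
From mathcomp Require Import all_boot all_order all_algebra.
From mathcomp Require Import mpoly.
Set Implicit Arguments. Unset Strict Implicit. Unset Printing Implicit Defensive.
Import Order.TTheory GRing.Theory Num.Theory.
Local Open Scope ring_scope.

Definition state (k : fieldType) (n : nat) (h : {mpoly k[n]}) : pred 'X_{1..n} :=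
  fun m => m \in msupp h.

(* "p does not divide e" where p = char k; for p = 0 this means e <> 0. *)
Definition char_ndvd (k : fieldType) (e : nat) : Prop :=
  (e != 0)%N /\ forall p : nat, p \in [pchar k] -> ~~ (p %| e)%N.

Definition lin_change (k : fieldType) (n : nat) (A : 'M[k]_n) (f : {mpoly k[n]})
  : {mpoly k[n]} :=
  comp_mpoly [tuple \sum_(j < n) A i j *: 'X_j | i < n] f.

Definition only_vars (k : fieldType) (n : nat) (S : pred 'I_n) (h : {mpoly k[n]}) : Prop :=
  forall m : 'X_{1..n}, m \in msupp h -> forall i : 'I_n, ~~ S i -> m i = 0%N.

(* f is a direct sum: after an invertible linear change of variables,
   f = f1(x_1..x_a) + f2(x_{a+1}..x_n), 1 <= a <= n-1, f1, f2 <> 0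
   (0-based indices: first block is i < a). *)
Definition direct_sum (k : fieldType) (n : nat) (f : {mpoly k[n]}) : Prop :=
  exists (A : 'M[k]_n) (a : nat) (f1 f2 : {mpoly k[n]}),
    [/\ A \in unitmx, (1 <= a <= n - 1)%N,
        lin_change A f = f1 + f2,
        f1 != 0 /\ f2 != 0 &
        only_vars (fun i : 'I_n => (i < a)%N) f1 /\
        only_vars (fun i : 'I_n => (a <= i)%N) f2].

Definition hess_graph (k : fieldType) (n : nat) (f : {mpoly k[n]}) : rel 'I_n :=
  fun i j => mderiv j (mderiv i f) != 0.

Definition connected_graph (T : finType) (e : rel T) : Prop :=
  forall x y : T, connect e x y.

(* If f o A = f1 + f2 splits along the first a coordinates, then g := f1 o A^-1
   satisfies d_l g = sum_i C_il d_i f with C = A diag(1,..,1,0,..,0) A^-1.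
   Conditions (1)-(3) force C to be diagonal: were C_il <> 0 with i <> l, then
   for mu in Xi(d_i f) the monomial x^mu x_l would lie in Xi(g), hence by (3)
   in Xi(f), so mu would lie in Xi(d_l f), contradicting (2).  Comparing the
   mixed partials of g gives C_ii = C_jj along every edge of the Hessian graph,
   so by (4) C is scalar; but C is conjugate to the partial identity of rank a,
   0 < a < n, which is not scalar. *)

From HB Require Import structures.
From mathcomp Require Import all_boot all_order all_algebra.
From mathcomp Require Import mpoly zify.
Import Order.TTheory GRing.Theory Num.Theory.
Set Implicit Arguments. Unset Strict Implicit. Unset Printing Implicit Defensive.
Local Open Scope ring_scope.

Section MpolyCalculus.
Variable R : comNzRingType.

Lemma mpoly_ring_ind n (P : {mpoly R[n]} -> Prop) :
  (forall c, P c%:MP) -> (forall i, P 'X_i) ->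
  (forall p q, P p -> P q -> P (p + q)) ->
  (forall p q, P p -> P q -> P (p * q)) -> forall p, P p.
Proof.
move=> PC PX PD PM p; elim/mpolyind: p => [|c m p _ _ Pp]; first by rewrite -mpolyC0.
apply: (PD) => //; rewrite -mul_mpolyC; apply: (PM) => //.
rewrite mpolyXE_id; apply: big_ind => //; first by rewrite -mpolyC1.
move=> i _; elim: (m i) => [|e IHe]; first by rewrite expr0 -mpolyC1.
by rewrite exprS; apply: (PM).
Qed.

Lemma mderivXU n (i j : 'I_n) : mderiv j ('X_i : {mpoly R[n]}) = (i == j)%:R.
Proof.
rewrite mderivX mnm1E; have [<-|_] := eqVneq i j; last by rewrite scale0r.
have -> : (U_(i) - U_(i))%MM = 0%MM by apply/mnmP => x; rewrite !mnmE subnn.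
by rewrite mpolyX0 scale1r.
Qed.

Lemma mderiv_comp_mpoly n m (lq : n.-tuple {mpoly R[m]}) (p : {mpoly R[n]}) i :
  mderiv i (p \mPo lq) = \sum_(j < n) mderiv i (tnth lq j) * (mderiv j p \mPo lq).
Proof.
elim/mpoly_ring_ind: p => [c|j0|p q IHp IHq|p q IHp IHq].
- by rewrite comp_mpolyC !mderivC big1 // => j _; rewrite mderivC comp_mpoly0 mulr0.
- rewrite comp_mpolyXU -tnth_nth (bigD1 j0) //= big1 ?addr0.
    by rewrite mderivXU eqxx comp_mpoly1 mulr1.
  by move=> j nj; rewrite mderivXU eq_sym (negbTE nj) comp_mpoly0 mulr0.
- rewrite comp_mpolyD mderivD IHp IHq -big_split /=.
  by apply: eq_bigr => j _; rewrite mderivD comp_mpolyD mulrDr.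
- rewrite rmorphM mderivM IHp IHq mulr_suml mulr_sumr -big_split /=.
  apply: eq_bigr => j _; rewrite mderivM comp_mpolyD !rmorphM mulrDr.
  by congr (_ + _); [rewrite mulrA | rewrite mulrCA].
Qed.

Lemma comp_mpolyA n m l (lq : n.-tuple {mpoly R[m]}) (lr : m.-tuple {mpoly R[l]})
    (p : {mpoly R[n]}) :
  (p \mPo lq) \mPo lr = p \mPo [tuple tnth lq i \mPo lr | i < n].
Proof.
elim/mpoly_ring_ind: p => [c|j|p q IHp IHq|p q IHp IHq].
- by rewrite !comp_mpolyC.
- by rewrite !comp_mpolyXU -!tnth_nth tnth_mktuple.
- by rewrite !comp_mpolyD IHp IHq.
- by rewrite !rmorphM /= IHp IHq.
Qed.

Lemma mcoeff_mderiv_subU n (p : {mpoly R[n]}) (m : 'X_{1..n}) j :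
  (0 < m j)%N -> (mderiv j p)@_(m - U_(j)) = p@_m *+ m j.
Proof.
move=> mj_gt0; rewrite mcoeff_mderiv mnmBE mnm1E eqxx subn1 prednK //.
congr (_@__ *+ _); apply/mnmP => x; rewrite mnmDE mnmBE mnm1E.
by case: eqP => [<-|_]; rewrite ?addn1 ?subn1 ?prednK ?addn0 ?subn0.
Qed.

Lemma msupp_mderiv n (p : {mpoly R[n]}) (m : 'X_{1..n}) i :
  m \in msupp (mderiv i p) -> (m + U_(i))%MM \in msupp p.
Proof.
by rewrite !mcoeff_msupp mcoeff_mderiv; apply: contraNneq => ->; rewrite mul0rn.
Qed.

End MpolyCalculus.

Lemma char_ndvd_natr (k : fieldType) (e : nat) : (e%:R : k) != 0 -> char_ndvd k e.
Proof.
move=> nz_e; split; first by apply: contraNneq nz_e => ->.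
by move=> p char_p; rewrite (dvdn_pcharf char_p).
Qed.

Lemma mul_mx_pid_mxE (R : pzSemiRingType) m n a (A : 'M[R]_(m, n)) i j :
  (A *m pid_mx a) i j = A i j * (j < a)%:R.
Proof.
rewrite mxE (bigD1 j) //= big1 ?addr0 => [|t nt]; first by rewrite mxE eqxx.
by rewrite mxE val_eqE (negbTE nt) mulr0.
Qed.

Section LinChange.
Variables (k : fieldType) (n : nat).
Implicit Types (A B : 'M[k]_n) (p : {mpoly k[n]}).

HB.instance Definition _ A :=
  GRing.Linear.copy (lin_change A)
    (comp_mpoly [tuple \sum_(j < n) A i j *: 'X_j | i < n]).

Lemma lin_changeM A B p : lin_change B (lin_change A p) = lin_change (A *m B) p.
Proof.
rewrite /lin_change comp_mpolyA; congr comp_mpoly; apply: eq_from_tnth => i.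
rewrite !tnth_mktuple raddf_sum /=.
under eq_bigr => j _ do
  rewrite comp_mpolyZ comp_mpolyXU -tnth_nth tnth_mktuple scaler_sumr.
rewrite exchange_big /=; apply: eq_bigr => l _; rewrite mxE scaler_suml.
by apply: eq_bigr => j _; rewrite scalerA.
Qed.

Lemma lin_change1 p : lin_change 1%:M p = p.
Proof.
rewrite /lin_change -[RHS]comp_mpoly_id; congr comp_mpoly.
apply: eq_from_tnth => i; rewrite !tnth_mktuple (bigD1 i) //= big1 ?addr0.
  by rewrite mxE eqxx scale1r.
by move=> j /negbTE nj; rewrite mxE eq_sym nj scale0r.
Qed.

Lemma mderiv_lin_change A p l :
  mderiv l (lin_change A p) = \sum_(i < n) A i l *: lin_change A (mderiv i p).
Proof.
rewrite /lin_change mderiv_comp_mpoly; apply: eq_bigr => i _.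
rewrite tnth_mktuple raddf_sum (bigD1 l) //= big1 ?addr0.
  by rewrite mderivZ mderivXU eqxx -scalerAl mul1r.
by move=> j nj; rewrite mderivZ mderivXU (negbTE nj) scaler0.
Qed.

Lemma only_vars_mderiv (S : pred 'I_n) p j :
  only_vars S p -> ~~ S j -> mderiv j p = 0.
Proof.
move=> vars_p Sj; apply/mpolyP => m; rewrite mcoeff_mderiv mcoeff0.
have [/vars_p/(_ j Sj)|] := boolP (m + U_(j) \in msupp p)%MM.
  by rewrite mnmDE mnm1E eqxx addn1.
by rewrite mcoeff_msupp negbK => /eqP ->; rewrite mul0rn.
Qed.

Lemma mderiv_direct_summand A a (f f1 f2 : {mpoly k[n]}) :
    A \in unitmx -> lin_change A f = f1 + f2 ->
    only_vars (fun i : 'I_n => (i < a)%N) f1 ->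
    only_vars (fun i : 'I_n => (a <= i)%N) f2 ->
  forall l, mderiv l (lin_change (invmx A) f1) =
            \sum_(i < n) (A *m pid_mx a *m invmx A) i l *: mderiv i f.
Proof.
move=> unitA split_f vars1 vars2 l.
have mderiv_f1 j : mderiv j f1 = ((j < a)%N)%:R *: mderiv j (lin_change A f).
  rewrite split_f mderivD; have [ja|aj] := ltnP j a.
    by rewrite (only_vars_mderiv vars2) ?addr0 ?scale1r // -ltnNge.
  by rewrite (only_vars_mderiv vars1) ?add0r ?scale0r // -leqNgt.
rewrite mderiv_lin_change.
under eq_bigr => j _ do
  rewrite mderiv_f1 mderiv_lin_change linearZ linear_sum /= scaler_sumr scaler_sumr.
rewrite exchange_big /=; apply: eq_bigr => i _.
rewrite mxE scaler_suml; apply: eq_bigr => j _.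
rewrite [lin_change (invmx A) _]linearZ /= lin_changeM mulmxV // lin_change1.
by rewrite !scalerA mul_mx_pid_mxE mulrC [_ * A i j]mulrC.
Qed.

End LinChange.

Section GradientRigidity.
Variables (k : fieldType) (n d : nat) (f : {mpoly k[n]}).
Hypothesis f_homog : f \is d.-homog.
Hypothesis state_mderiv_neq0 : forall i : 'I_n, exists m, state (mderiv i f) m.
Hypothesis state_mderiv_disjoint : forall i j : 'I_n, (i < j)%N ->
  forall m, ~ (state (mderiv i f) m /\ state (mderiv j f) m).
Hypothesis stateE : forall m : 'X_{1..n},
  state f m <->
  [/\ mdeg m = d,
      exists i : 'I_n, char_ndvd k (m i) &
      forall (i : 'I_n) (m' : 'X_{1..n}),
        state (mderiv i ('X_[m] : {mpoly k[n]})) m' ->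
        exists j : 'I_n, state (mderiv j f) m'].

Variables (g : {mpoly k[n]}) (C : 'M[k]_n).
Hypothesis mderiv_g : forall l, mderiv l g = \sum_(i < n) C i l *: mderiv i f.

Lemma mcoeff_mderiv_disjoint i j m :
  i != j -> m \in msupp (mderiv i f) -> (mderiv j f)@_m = 0.
Proof.
move=> neq_ij supp_i; apply/eqP; rewrite -[_ == 0]negbK -mcoeff_msupp.
apply/negP => supp_j; have [lt_ij|lt_ji|/val_inj eq_ij] := ltngtP i j.
- exact: (state_mderiv_disjoint lt_ij (conj supp_i supp_j)).
- exact: (state_mderiv_disjoint lt_ji (conj supp_j supp_i)).
- by rewrite eq_ij eqxx in neq_ij.
Qed.

Lemma mcoeff_mderiv_g l i m :
  m \in msupp (mderiv i f) -> (mderiv l g)@_m = C i l * (mderiv i f)@_m.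
Proof.
move=> supp_i; rewrite mderiv_g raddf_sum (bigD1 i) //= big1 ?addr0 => [|j nj].
  by rewrite mcoeffZ.
by rewrite mcoeffZ (mcoeff_mderiv_disjoint _ supp_i) ?mulr0 // eq_sym.
Qed.

Lemma msupp_mderiv_g l m :
  m \in msupp (mderiv l g) -> exists j, m \in msupp (mderiv j f).
Proof.
have [j supp_j _|none] := pickP (fun j => m \in msupp (mderiv j f)); first by exists j.
rewrite mcoeff_msupp mderiv_g raddf_sum big1 ?eqxx // => j _.
move/negbT: (none j); rewrite /= mcoeffZ mcoeff_msupp negbK => /eqP ->.
by rewrite mulr0.
Qed.

Lemma msupp_g_mderivX m j m' :
  m \in msupp g -> m' \in msupp (mderiv j ('X_[m] : {mpoly k[n]})) ->
  exists j', m' \in msupp (mderiv j' f).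
Proof.
move=> supp_m; rewrite mderivX.
have [-> |nz_mj] := eqVneq ((m j)%:R : k) 0; first by rewrite scale0r msupp0.
have mj_gt0 : (0 < m j)%N by rewrite lt0n; apply: contraNneq nz_mj => ->.
rewrite msuppMCX // inE => /eqP ->; apply: (@msupp_mderiv_g j).
by rewrite mcoeff_msupp mcoeff_mderiv_subU // -mulr_natr mulf_neq0 // -mcoeff_msupp.
Qed.

Lemma msupp_g_state m l :
  m \in msupp g -> mdeg m = d -> (m l)%:R != 0 :> k -> state f m.
Proof.
move=> supp_m deg_m nz_ml; apply/stateE; split => //.
  by exists l; exact: char_ndvd_natr.
by move=> j m'; exact: msupp_g_mderivX.
Qed.

Lemma mderiv_g_offdiag i l : i != l -> C i l = 0.
Proof.
move=> neq_il; apply/eqP/negPn/negP => nz_C.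
have [mu supp_i] := state_mderiv_neq0 i.
pose m := (mu + U_(l))%MM.
have ml : m l = (mu l).+1 by rewrite mnmDE mnm1E eqxx addn1.
have : (mderiv l g)@_mu != 0.
  by rewrite (mcoeff_mderiv_g l supp_i) mulf_neq0 // -mcoeff_msupp.
rewrite mcoeff_mderiv -/m -mulr_natr -ml mulf_eq0 negb_or -mcoeff_msupp.
case/andP => supp_g nz_ml.
have deg_m : mdeg m = d.
  by have /= := dhomog_mf f_homog (msupp_mderiv supp_i); rewrite /m !mdegD !mdeg1.
have supp_l : mu \in msupp (mderiv l f).
  rewrite mcoeff_msupp mcoeff_mderiv -/m -mulr_natr -ml mulf_neq0 // -mcoeff_msupp.
  exact: msupp_g_state supp_g deg_m nz_ml.
by move: supp_l; rewrite mcoeff_msupp (mcoeff_mderiv_disjoint neq_il supp_i) eqxx.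
Qed.

Lemma mderiv_g_diag l : mderiv l g = C l l *: mderiv l f.
Proof.
rewrite mderiv_g (bigD1 l) //= big1 ?addr0 // => i neq_il.
by rewrite mderiv_g_offdiag ?scale0r.
Qed.

Lemma hess_graph_mderiv_g i j : hess_graph f i j -> C i i = C j j.
Proof.
rewrite /hess_graph => nz_fij; apply/eqP; rewrite -subr_eq0.
have gij : mderiv j (mderiv i g) = C i i *: mderiv j (mderiv i f).
  by rewrite mderiv_g_diag mderivZ.
have gji : mderiv j (mderiv i g) = C j j *: mderiv j (mderiv i f).
  by rewrite mderiv_comm mderiv_g_diag mderivZ mderiv_comm.
have : (C i i - C j j) *: mderiv j (mderiv i f) = 0.
  by rewrite scalerBl -gij -gji subrr.
by move/eqP; rewrite scaler_eq0 (negbTE nz_fij) orbF.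
Qed.

Lemma connected_mderiv_g_scalar i :
  connected_graph (hess_graph f) -> C = (C i i)%:M.
Proof.
move=> conn; apply/matrixP => x y; rewrite mxE.
have [<-|neq_xy] := eqVneq x y; last by rewrite mderiv_g_offdiag.
suff /eqP : C i i == C x x by rewrite mulr1n.
have closed_Cii : closed (hess_graph f) [pred z | C i i == C z z].
  by move=> u v /hess_graph_mderiv_g; rewrite !inE => ->.
by have := closed_connect closed_Cii (conn i x); rewrite !inE eqxx => <-.
Qed.

End GradientRigidity.

Lemma conj_unitmx_scalar (R : comUnitRingType) n (A D : 'M[R]_n) c :
  A \in unitmx -> A *m D *m invmx A = c%:M -> D = c%:M.
Proof.
move=> unitA /(congr1 (fun X => invmx A *m X *m A)).
by rewrite !mulmxA mulVmx // mul1mx mulmxKV // scalar_mxC mulmxKV.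
Qed.

Lemma pid_mx_neq_scalar (R : nzRingType) n a (c : R) :
  (0 < a < n)%N -> pid_mx a != c%:M :> 'M[R]_n.
Proof.
case: n => [|n] /andP[a_gt0 le_an]; first by rewrite ltn0 in le_an.
apply/eqP => /matrixP pid_c; have := pid_c ord0 ord0; have := pid_c ord_max ord_max.
rewrite !mxE !eqxx /= !mulr1n a_gt0 ltnNge -ltnS le_an => <- /eqP.
by rewrite oner_eq0.
Qed.

Theorem theorem5p5 (k : fieldType) (n d : nat) (f : {mpoly k[n]}) :
  (exists x : k, x != 0 /\ x != 1) ->
  f \is d.-homog ->
  (3 <= d)%N ->
  (forall i : 'I_n, exists m, state (mderiv i f) m) ->
  (forall i j : 'I_n, (i < j)%N ->
     forall m, ~ (state (mderiv i f) m /\ state (mderiv j f) m)) ->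
  (forall m : 'X_{1..n},
     state f m <->
     [/\ mdeg m = d,
         exists i : 'I_n, char_ndvd k (m i) &
         forall (i : 'I_n) (m' : 'X_{1..n}),
           state (mderiv i ('X_[m] : {mpoly k[n]})) m' ->
           exists j : 'I_n, state (mderiv j f) m']) ->
  connected_graph (hess_graph f) ->
  ~ direct_sum f.
Proof.
move=> _ f_homog _ state_neq0 state_disjoint stateE conn.
case=> A [a [f1 [f2 [unitA a_range split_f _ [vars1 vars2]]]]].
have a_bounds : (0 < a < n)%N by lia.
have i0 : 'I_n by exists 0%N; lia.
have grad_f1 := mderiv_direct_summand unitA split_f vars1 vars2.
have := connected_mderiv_g_scalar
  f_homog state_neq0 state_disjoint stateE grad_f1 i0 conn.
move/(conj_unitmx_scalar unitA)/eqP.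
by rewrite (negbTE (pid_mx_neq_scalar _ a_bounds)).
Qed.
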